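(* Let $s\in\{1,2\}$ and let $C^s=\{L^s_{a_0,b_0},\dots,L^s_{a_4,b_4}\}\subset\mathcal{L}^s$ be a set of pairwise disjoint lines on ${\rm F}_5$ with $\#C^s=5$. If $\#\{a_0,\dots,a_4\}\le3$, then $\#\psi_5(C^s)\ge3$.
   Context: ${\rm F}_5\subset\mathbb{P}^3(\mathbb{C})$ is the surface $x^5-y^5-z^5+w^5=0$. Let $\eta$ be a primitive 5th root of unity and $v=-1$. For $k,i\in\{0,\dots,4\}$ define $L^1_{k,i}:\{x=\eta^{k+i}z,\ y=\eta^i w\}$, $L^2_{k,i}:\{x=v\eta^i w,\ y=v\eta^{k+i}z\}$, and $\mathcal{L}^s=\{L^s_{k,i}\}_{k,i}$. Define $\psi_5(k,i)=r_5(k+2i)$ with $r_5$ the remainder modulo 5, and $\psi_5(X)$ the set of values $\psi_5(k,i)$ over the lines $L^s_{k,i}\in X$. *)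

From mathcomp Require Import all_boot all_order all_algebra all_field.
Set Implicit Arguments. Unset Strict Implicit. Unset Printing Implicit Defensive.
Import GRing.Theory Num.Theory.
Local Open Scope ring_scope.

(* Points of P^3(C) are represented by nonzero vectors (x,y,z,w) in algC^4;
   a line is identified with the set of nonzero vectors satisfying its
   two linear equations.  v = -1. *)
Definition vF5 : algC := -1.

(* on_line eta s k i x y z w : the point [x:y:z:w] lies on L^s_{k,i}.
   s = 1 gives L^1, any other s gives L^2 (only s in {1,2} is used). *)
Definition on_line (eta : algC) (s k i : nat) (x y z w : algC) : Prop :=
  if s == 1%N then x = eta ^+ (k + i) * z /\ y = eta ^+ i * w
  else x = vF5 * eta ^+ i * w /\ y = vF5 * eta ^+ (k + i) * z.

Definition lines_disjoint (eta : algC) (s : nat) (l1 l2 : 'I_5 * 'I_5) : Prop :=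
  forall x y z w : algC, (x, y, z, w) <> (0, 0, 0, 0) ->
    ~ (on_line eta s l1.1 l1.2 x y z w /\ on_line eta s l2.1 l2.2 x y z w).

Definition psi5 (l : 'I_5 * 'I_5) : 'I_5 := inord ((l.1 + 2 * l.2) %% 5).

From mathcomp Require Import all_boot all_order all_algebra all_field.
Import GRing.Theory Num.Theory.
Set Implicit Arguments. Unset Strict Implicit. Unset Printing Implicit Defensive.
Local Open Scope ring_scope.

(* Two lines of one family meet as soon as they share the index i, or their
   indices k + i agree mod 5.  Hence C is the graph {(sigma b - b, b)} of a
   permutation sigma of Z/5, with first indices sigma b - b and psi5-values
   sigma b + b.  For a permutation sigma of Z/p, p prime, b |-> sigma b + b
   never takes exactly two values u != v: the fibre over u is stable under
   translation by v - u, so it is everything.  Nor is it constant when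
   sigma b - b repeats a value, since sigma b = u - b makes
   sigma b - b = u - 2b injective for odd p. *)

Section PrimeZp.

Variable p : nat.
Hypothesis p_pr : prime p.

Let p_gt1 : (1 < p)%N. Proof. exact: prime_gt1. Qed.

Lemma neq0_Zp_unit (c : 'Z_p) : c != 0 -> c \is a GRing.unit.
Proof.
move=> c_neq0; rewrite -[c]natr_Zp unitZpE // prime_coprime // gtnNdvd //.
  by rewrite lt0n.
by rewrite -[ltnRHS](Zp_cast p_gt1).
Qed.

Lemma Zp_mulrn_onto (c : 'Z_p) : c != 0 -> forall j, exists k, j = c *+ k.
Proof.
move=> /neq0_Zp_unit c_unit j; exists (val (j / c)).
by rewrite -mulr_natl natr_Zp divrK.
Qed.

Lemma Zp_translation_closed (c : 'Z_p) (P : pred 'Z_p) :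
  c != 0 -> (forall i, P i -> P (i + c)) -> forall i, P i -> forall j, P j.
Proof.
move=> c_neq0 Pc i Pi j; have [k jik] := Zp_mulrn_onto c_neq0 (j - i).
rewrite -(subrK i j) {}jik addrC; elim: k => [|k IHk]; first by rewrite addr0.
by rewrite mulrSr addrA; apply: Pc.
Qed.

Variable sigma : 'Z_p -> 'Z_p.
Hypothesis sigma_inj : injective sigma.

Lemma addr_perm_third_value i j : sigma i + i != sigma j + j ->
  exists k, (sigma k + k != sigma i + i) && (sigma k + k != sigma j + j).
Proof.
move=> neq_ij; set u := sigma i + i; set v := sigma j + j.
case: (pickP (fun k => (sigma k + k != u) && (sigma k + k != v))) => [k | two_values].
  by exists k.
have c_neq0 : v - u != 0 by rewrite subr_eq0 eq_sym.
have u_closed k : sigma k + k == u -> sigma (k + (v - u)) + (k + (v - u)) == u.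
  move=> /eqP ek; apply: contraFT (two_values (k + (v - u))) => -> /=.
  apply/negP => /eqP ekc; case/negP: c_neq0.
  have : sigma (k + (v - u)) = sigma k.
    by apply: (addIr (k + (v - u))); rewrite ekc addrA ek addrC subrK.
  by move/sigma_inj/eqP; rewrite -subr_eq0 addrC addKr.
have := Zp_translation_closed c_neq0 u_closed (eqxx u) j.
by rewrite eq_sym (negbTE neq_ij).
Qed.

Lemma addr_perm_nonconstant : odd p -> ~ injective (fun i => sigma i - i) ->
  exists i, sigma i + i != sigma 0 + 0.
Proof.
move=> p_odd diff_not_inj; set u := sigma 0 + 0; clearbody u.
case: (pickP (fun i => sigma i + i != u)) => [i | const]; first by exists i.
have sigmaE i : sigma i = u - i.
  by apply/eqP; rewrite eq_sym subr_eq eq_sym; apply/negbFE; exact: const.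
have two_unit : (2%:R : 'Z_p) \is a GRing.unit by rewrite unitZpE // coprimen2.
case: diff_not_inj => i j /=; rewrite (sigmaE i) (sigmaE j).
rewrite -!addrA -!opprD => /addrI/oppr_inj.
rewrite -[i + i]mulr2n -[j + j]mulr2n -[i *+ 2]mulr_natr -[j *+ 2]mulr_natr.
exact: mulIr.
Qed.

Lemma card_addr_perm_gt2 : odd p -> ~ injective (fun i => sigma i - i) ->
  (2 < #|[set sigma i + i | i : 'Z_p]%R|)%N.
Proof.
move=> p_odd /(addr_perm_nonconstant p_odd)[i ei].
have [k /andP[eki ek0]] := addr_perm_third_value ei.
have <- : #|[set sigma k + k; sigma i + i; sigma 0 + 0]| = 3%N.
  by rewrite -setUA cardsU1 cards2 !inE negb_or eki ek0 ei.
apply/subset_leq_card/subsetP => x; rewrite -setUA.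
by case/setU1P => [|/set2P[]] ->; apply: imset_f.
Qed.

End PrimeZp.

Lemma expr_ord_addr (R : pzSemiRingType) n (eta : R) (x y : 'I_n.+1) :
  eta ^+ n.+1 = 1 -> eta ^+ (x + y)%N = eta ^+ (x + y)%R.
Proof. by move=> eta_n; rewrite -(expr_mod _ eta_n). Qed.

Lemma psi5E (l : 'I_5 * 'I_5) : psi5 l = l.1 + l.2 *+ 2.
Proof.
by apply: val_inj; rewrite mulr2n /psi5 /= inordK ?ltn_pmod // modnDmr mul2n addnn.
Qed.

Section DisjointLines.

Variables (eta : algC) (s : nat).

Lemma lines_meet_eq_snd (l1 l2 : 'I_5 * 'I_5) :
  l1.2 = l2.2 -> ~ lines_disjoint eta s l1 l2.
Proof.
rewrite /lines_disjoint /on_line => e12.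
have w_neq0 (x y z : algC) : (x, y, z, 1 : algC) <> (0, 0, 0, 0).
  by move=> /(congr1 snd)/eqP; rewrite oner_eq0.
case: (s == 1%N) => disj.
- by apply: (disj 0 (eta ^+ l1.2) 0 1 (w_neq0 _ _ _)); rewrite e12 !mulr0 mulr1.
- apply: (disj (vF5 * eta ^+ l1.2) 0 0 1 (w_neq0 _ _ _)).
  by rewrite e12 !mulr0 mulr1.
Qed.

Lemma lines_meet_eq_sum (l1 l2 : 'I_5 * 'I_5) : eta ^+ 5 = 1 ->
  l1.1 + l1.2 = l2.1 + l2.2 -> ~ lines_disjoint eta s l1 l2.
Proof.
rewrite /lines_disjoint /on_line => eta5 e12.
have eta_e12 : eta ^+ (l1.1 + l1.2) = eta ^+ (l2.1 + l2.2).
  by rewrite !(expr_ord_addr _ _ eta5) e12.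
have z_neq0 (x y w : algC) : (x, y, 1 : algC, w) <> (0, 0, 0, 0).
  by move=> /(congr1 (fun t => t.1.2))/eqP; rewrite oner_eq0.
case: (s == 1%N) => disj.
- apply: (disj (eta ^+ (l1.1 + l1.2)) 0 1 0 (z_neq0 _ _ _)).
  by rewrite eta_e12 !mulr0 mulr1.
- apply: (disj 0 (vF5 * eta ^+ (l1.1 + l1.2)) 1 0 (z_neq0 _ _ _)).
  by rewrite eta_e12 !mulr0 mulr1.
Qed.

Lemma pairwise_disjoint_lines_inj (T : Type) (f : 'I_5 * 'I_5 -> T)
    (C : {set 'I_5 * 'I_5}) :
  (forall l1 l2, f l1 = f l2 -> ~ lines_disjoint eta s l1 l2) ->
  {in C &, forall l1 l2, l1 != l2 -> lines_disjoint eta s l1 l2} ->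
  {in C &, injective f}.
Proof.
move=> meet disj l1 l2 l1C l2C f12; have [//|l12] := eqVneq l1 l2.
by case: (meet _ _ f12 (disj _ _ l1C l2C l12)).
Qed.

End DisjointLines.

Lemma set_graph_of_inj_snd (T U : finType) (C : {set U * T}) :
  {in C &, injective snd} -> #|C| = #|T| ->
  exists g : T -> U, C = [set (g i, i) | i : T].
Proof.
move=> snd_inj cardC.
have snd_onto : snd @: C = setT.
  by apply/eqP; rewrite eqEcard subsetT cardsT (card_in_imset snd_inj) cardC leqnn.
have /fin_all_exists[g gC] i : exists u, (u, i) \in C.
  have : i \in snd @: C by rewrite snd_onto inE.
  by case/imsetP => -[u j] lC /= ->; exists u.
exists g; apply/eqP; rewrite eq_sym eqEcard card_imset; last by move=> i j [].
by rewrite cardC leqnn andbT; apply/subsetP => _ /imsetP[i _ ->].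
Qed.

Theorem lemma3p4 (eta : algC) (s : nat) (C : {set 'I_5 * 'I_5}) :
  5.-primitive_root eta ->
  (s == 1%N) || (s == 2%N) ->
  #|C| = 5%N ->
  {in C &, forall l1 l2, l1 != l2 -> lines_disjoint eta s l1 l2} ->
  (#|[set l.1 | l in C]| <= 3)%N ->
  (3 <= #|[set psi5 l | l in C]|)%N.
Proof.
move=> eta_prim _ cardC disj card_fst.
have snd_inj := pairwise_disjoint_lines_inj (@lines_meet_eq_snd eta s) disj.
have sum_inj := pairwise_disjoint_lines_inj
  (fun l1 l2 => lines_meet_eq_sum (prim_expr_order eta_prim)) disj.
have cardC_ord : #|C| = #|'I_5| by rewrite card_ord.
have [g C_graph] := set_graph_of_inj_snd snd_inj cardC_ord.
have gC i : (g i, i) \in C by rewrite C_graph imset_f.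
pose sigma i := g i + i.
have sigma_inj : injective sigma by move=> i j /(sum_inj _ _ (gC i) (gC j)) [].
have fst_sigma : [set l.1 | l in C] = [set sigma i - i | i : 'I_5].
  by rewrite C_graph -imset_comp; apply: eq_imset => i; rewrite /= addrK.
have psi5_sigma : [set psi5 l | l in C] = [set sigma i + i | i : 'I_5].
  by rewrite C_graph -imset_comp; apply: eq_imset => i; rewrite /= psi5E mulr2n addrA.
rewrite psi5_sigma; apply: (@card_addr_perm_gt2 5 isT sigma sigma_inj isT).
move=> diff_inj.
by rewrite fst_sigma card_imset // card_ord in card_fst.
Qed.
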